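(* Consider Algorithm NCB run with inputs $k\ge2$ and $T$ on an instance with $\mu^*\ge\frac{32\sqrt{k\log k\log T}}{\sqrt T}$. On the event $G$, every arm $i$ that is pulled at least once in Phase II satisfies $$\mu_i\ge\mu^*-8\sqrt{\frac{\mu^*\log T}{T_i-1}},$$ where $T_i$ is the total number of times arm $i$ is pulled during the whole run.
   Context: Bandit setup: $k$ arms, arm $i$ a distribution on $[0,1]$ with mean $\mu_i$, $\mu^*:=\max_i\mu_i$. $\log$ is the natural logarithm. Canonical model: a $k\times T$ table $(Y_{i,s})$ of independent entries with $Y_{i,s}$ distributed as arm $i$; the $s$-th pull of arm $i$ yields $Y_{i,s}$. Let $\widehat\mu_{i,s}:=\frac1s\sum_{r=1}^sY_{i,r}$. Algorithm NCB (inputs $k,T$): $\widetilde T:=16\sqrt{\frac{kT\log T}{\log k}}$. Phase I: in each round $t\le\widetilde T$ pull a uniformly random arm. Phase II: in each round $\widetilde T<t\le T$ pull an arm maximizing $\mathrm{NCB}_i:=\widehat\mu_i+4\sqrt{\widehat\mu_i\log T/n_i}$, where $n_i$ is the number of pulls of $i$ before the round and $\widehat\mu_i$ its empirical mean (ties arbitrary). Events: $G_1$: every arm is pulled at least $\frac{\widetilde T}{2k}$ times in Phase I. $G_2$: for every arm $i$ with $\mu_i>\frac{6\sqrt{k\log k\log T}}{\sqrt T}$ and every integer $s$ with $\frac{\widetilde T}{2k}\le s\le T$, $|\mu_i-\widehat\mu_{i,s}|\le 3\sqrt{\frac{\mu_i\log T}{s}}$. $G_3$: for every arm $j$ with $\mu_j\le\frac{6\sqrt{k\log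 k\log T}}{\sqrt T}$ and every integer $s$ with $\frac{\widetilde T}{2k}\le s\le T$, $\widehat\mu_{j,s}\le \frac{9\sqrt{k\log k\log T}}{\sqrt T}$. $G:=G_1\cap G_2\cap G_3$. *)

From HB Require Import structures.
From mathcomp Require Import all_boot all_order all_algebra.
From mathcomp Require Import reals exp.
Set Implicit Arguments. Unset Strict Implicit. Unset Printing Implicit Defensive.
Import Order.TTheory GRing.Theory Num.Theory.
Local Open Scope ring_scope.

Section NCB.
Variables (R : realType) (k T : nat).

Definition Ttil : R :=
  16 * Num.sqrt (k%:R * T%:R * ln (T%:R) / ln (k%:R)).

(* mu^* = max_i mu_i (the mu_i are in [0,1], so 0 is a neutral seed) *)
Definition mustar (mu : 'I_k -> R) : R := \big[Num.max/0]_(i < k) mu i.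

(* empirical mean of the first s entries Y_{i,1..s} of row i *)
Definition muhat (Y : 'I_k -> nat -> R) (i : 'I_k) (s : nat) : R :=
  (\sum_(1 <= r < s.+1) Y i r) / s%:R.

(* a t = arm pulled in round t (rounds 1..T).  number of pulls of i
   strictly before round t *)
Definition npulls (a : nat -> 'I_k) (i : 'I_k) (t : nat) : nat :=
  count (fun u => a u == i) (iota 1 t.-1).

Definition Ttot (a : nat -> 'I_k) (i : 'I_k) : nat := npulls a i T.+1.

Definition phase1_pulls (a : nat -> 'I_k) (i : 'I_k) : nat :=
  count (fun t => (t%:R <= Ttil) && (a t == i)) (iota 1 T).

Definition NCB (Y : 'I_k -> nat -> R) (a : nat -> 'I_k) (i : 'I_k) (t : nat) : R :=
  let n := npulls a i t in
  muhat Y i n + 4 * Num.sqrt (muhat Y i n * ln (T%:R) / n%:R).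

(* the run a follows Algorithm NCB in Phase II (Phase I choices are arbitrary:
   the statement is pathwise on G; ties arbitrary) *)
Definition follows_NCB (Y : 'I_k -> nat -> R) (a : nat -> 'I_k) : Prop :=
  forall t : nat, (1 <= t <= T)%N -> Ttil < t%:R ->
    forall j : 'I_k, NCB Y a j t <= NCB Y a (a t) t.

Definition small_thr : R :=
  6 * Num.sqrt (k%:R * ln (k%:R) * ln (T%:R)) / Num.sqrt (T%:R).

Definition G1 (a : nat -> 'I_k) : Prop :=
  forall i : 'I_k, Ttil / (2 * k%:R) <= (phase1_pulls a i)%:R.

Definition G2 (mu : 'I_k -> R) (Y : 'I_k -> nat -> R) : Prop :=
  forall i : 'I_k, small_thr < mu i ->
    forall s : nat, Ttil / (2 * k%:R) <= s%:R -> (s <= T)%N ->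
      `|mu i - muhat Y i s| <= 3 * Num.sqrt (mu i * ln (T%:R) / s%:R).

Definition G3 (mu : 'I_k -> R) (Y : 'I_k -> nat -> R) : Prop :=
  forall j : 'I_k, mu j <= small_thr ->
    forall s : nat, Ttil / (2 * k%:R) <= s%:R -> (s <= T)%N ->
      muhat Y j s <= 9 * Num.sqrt (k%:R * ln (k%:R) * ln (T%:R)) / Num.sqrt (T%:R).

Definition eventG mu Y a : Prop := G1 a /\ G2 mu Y /\ G3 mu Y.

End NCB.

(* Write q := sqrt (k log k log T) / sqrt T.  On G1 every arm has been pulled at
   least Ttil/(2k) times before Phase II, and Ttil/(2k) * q = 8 log T exactly,
   so every width w_j = log T / n_j satisfies 8 w_j <= q <= mu^*/32.  Look at
   the last Phase II round t in which i is pulled: there T_i - 1 = n_i and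
   NCB_i >= NCB_{i^*}.  By G2 the best arm has NCB_{i^*} >= mu^*.  If mu_i were
   below the G3 threshold, G3 would give NCB_i <= 17 q < mu^*; so G2 applies to
   i as well, and solving mu^* <= muhat_i + 4 sqrt (muhat_i w_i) together with
   |mu_i - muhat_i| <= 3 sqrt (mu_i w_i) for sqrt mu_i gives the bound. *)

From HB Require Import structures.
From mathcomp Require Import all_boot all_order all_algebra.
From mathcomp Require Import reals exp ring lra zify.
Set Implicit Arguments. Unset Strict Implicit. Unset Printing Implicit Defensive.
Import Order.TTheory GRing.Theory Num.Theory.
Local Open Scope ring_scope.

Section IndexInequalities.
Variable R : rcfType.
Implicit Types m x mh w q : R.

Definition ncb_index mh w : R := mh + 4 * Num.sqrt (mh * w).

Lemma ge0_eq_sqr x : 0 <= x -> exists2 s, 0 <= s & x = s ^+ 2.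
Proof. by move=> x0; exists (Num.sqrt x); rewrite ?sqrtr_ge0 ?sqr_sqrtr. Qed.

Lemma sqrtrM_sqr (s v : R) : 0 <= s -> 0 <= v ->
  Num.sqrt (s ^+ 2 * v ^+ 2) = s * v.
Proof. by move=> s0 v0; rewrite -exprMn sqrtr_sqr ger0_norm ?mulr_ge0. Qed.

Lemma ncb_index_ge m mh w : 0 <= m -> 0 <= mh -> 0 <= w -> 64 * w <= m ->
  `|m - mh| <= 3 * Num.sqrt (m * w) -> m <= ncb_index mh w.
Proof.
move=> /ge0_eq_sqr[s s0 ->] /ge0_eq_sqr[z z0 ->] /ge0_eq_sqr[v v0 ->].
rewrite /ncb_index !sqrtrM_sqr // => sv /ler_normlP[_ lo].
have {}sv : 8 * v <= s by nra.
have zs : s - 2 * v <= z by nra.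
nra.
Qed.

Lemma ncb_index_le_small mh w q : 0 <= mh -> 0 <= w ->
  mh <= 9 * q -> 8 * w <= q -> ncb_index mh w <= 17 * q.
Proof.
move=> mh0 w0 hmh hw; rewrite /ncb_index.
have : Num.sqrt (mh * w) <= Num.sqrt ((2 * q) ^+ 2) by rewrite ler_sqrt //; nra.
rewrite sqrtr_sqr ger0_norm ?mulr_ge0 //; lra.
Qed.

Lemma mean_ge_of_ncb_index_ge m x mh w : 0 <= m -> 0 <= x -> 0 <= mh -> 0 <= w ->
  64 * w <= m -> `|x - mh| <= 3 * Num.sqrt (x * w) -> m <= ncb_index mh w ->
  m - 8 * Num.sqrt (m * w) <= x.
Proof.
move=> /ge0_eq_sqr[s s0 ->] /ge0_eq_sqr[y y0 ->].
move=> /ge0_eq_sqr[z z0 ->] /ge0_eq_sqr[v v0 ->].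
rewrite /ncb_index !sqrtrM_sqr // => sv /ler_normlP[hi _] hs.
have {}sv : 8 * v <= s by nra.
have zy : 2 * z <= 2 * y + 3 * v by nra.
have sy : s <= y + 4 * v by nra.
nra.
Qed.

End IndexInequalities.

Definition ncb_scale (R : realType) (k T : nat) : R :=
  Num.sqrt (k%:R * ln (k%:R) * ln (T%:R)) / Num.sqrt (T%:R).

Lemma Ttil_mul_scale (R : realType) (k T : nat) : (1 < k)%N -> (1 < T)%N ->
  Ttil R k T / (2 * k%:R) * ncb_scale R k T = 8 * ln (T%:R).
Proof.
move=> hk hT.
have k0 : 0 < k%:R :> R by rewrite ltr0n; lia.
have T0 : 0 < T%:R :> R by rewrite ltr0n; lia.
have lk : 0 < ln (k%:R : R) by rewrite ln_gt0 // ltr1n.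
have lT : 0 < ln (T%:R : R) by rewrite ln_gt0 // ltr1n.
have sT : 0 < Num.sqrt (T%:R : R) by rewrite sqrtr_gt0.
have prod : Num.sqrt (k%:R * T%:R * ln T%:R / ln k%:R) *
    Num.sqrt (k%:R * ln k%:R * ln T%:R) = k%:R * ln (T%:R : R) * Num.sqrt T%:R.
  rewrite -sqrtrM ?divr_ge0 ?mulr_ge0 ?ltW //.
  have -> : k%:R * T%:R * ln T%:R / ln k%:R * (k%:R * ln k%:R * ln T%:R) =
      (k%:R * ln (T%:R : R)) ^+ 2 * T%:R by field; lra.
  by rewrite sqrtrM ?sqr_ge0 // sqrtr_sqr ger0_norm // mulr_ge0 // ltW.
have regroup (x y : R) : 16 * x / (2 * k%:R) * (y / Num.sqrt T%:R) =
    8 * (x * y) / (k%:R * Num.sqrt T%:R).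
  by field; lra.
rewrite /Ttil /ncb_scale regroup prod; field; lra.
Qed.

Lemma width_le_scale (R : realType) (k T : nat) (n : R) :
  (1 < k)%N -> (1 < T)%N -> Ttil R k T / (2 * k%:R) <= n ->
  0 < ln (T%:R) / n /\ 8 * (ln (T%:R) / n) <= ncb_scale R k T.
Proof.
move=> hk hT hn.
have lT : 0 < ln (T%:R : R) by rewrite ln_gt0 // ltr1n.
have e := Ttil_mul_scale R hk hT.
have q0 : 0 <= ncb_scale R k T by rewrite divr_ge0 ?sqrtr_ge0.
have n0 : 0 < n.
  apply: lt_le_trans hn; rewrite lt_def divr_ge0 ?mulr_ge0 ?sqrtr_ge0 // andbT.
  by apply/eqP => h; move: e; rewrite h mul0r; lra.
split; first exact: divr_gt0.
by rewrite mulrA ler_pdivrMr // -e mulrC ler_wpM2l.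
Qed.

Section Pulls.
Variables (R : realType) (k T : nat) (a : nat -> 'I_k).

Lemma npulls_le_pred j t : (npulls a j t <= t.-1)%N.
Proof. by rewrite /npulls (leq_trans (count_size _ _)) // size_iota. Qed.

Lemma phase1_pulls_le_npulls j t : (1 <= t <= T)%N -> Ttil R k T < t%:R ->
  (phase1_pulls R T a j <= npulls a j t)%N.
Proof.
move=> /andP[t1 tT] ht; rewrite /phase1_pulls /npulls.
have -> : iota 1 T = iota 1 t.-1 ++ iota (1 + t.-1) (T - t.-1).
  by rewrite -iotaD subnKC // (leq_trans (leq_pred t)).
have late : count (fun u => (u%:R <= Ttil R k T) && (a u == j))
    (iota (1 + t.-1) (T - t.-1)) = 0%N.
  rewrite (eq_in_count (a2 := pred0)) ?count_pred0 // => u.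
  rewrite mem_iota add1n prednK // => /andP[tu _]; apply/negbTE.
  by rewrite negb_and -ltNge (lt_le_trans ht) // ler_nat.
by rewrite count_cat late addn0; apply: sub_count => u /andP[].
Qed.

Lemma last_phase2_pull i :
  (exists t, [/\ (1 <= t <= T)%N, Ttil R k T < t%:R & a t = i]) ->
  exists t, [/\ (1 <= t <= T)%N, Ttil R k T < t%:R, a t = i &
    Ttot T a i = (npulls a i t).+1].
Proof.
pose P t := [&& (1 <= t <= T)%N, Ttil R k T < t%:R & a t == i].
case=> t0 [t01 t0T /eqP at0]; have exP : exists t, P t by exists t0; apply/and3P.
have ubP t : P t -> (t <= T)%N by case/and3P=> /andP[].
case: (ex_maxnP exP ubP) => t /and3P[/andP[t1 tT] ht /eqP ati] tmax.
exists t; split; rewrite ?t1 ?tT // /Ttot /npulls /=.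
have -> : iota 1 T = iota 1 t.-1 ++ t :: iota t.+1 (T - t).
  have eT : T = (t.-1 + (T - t).+1)%N by lia.
  by rewrite {1}eT iotaD add1n prednK.
have late : count (fun u => a u == i) (iota t.+1 (T - t)) = 0%N.
  rewrite (eq_in_count (a2 := pred0)) ?count_pred0 // => u.
  rewrite mem_iota => /andP[tu uT]; apply/negbTE/negP => /eqP aui.
  have : P u.
    apply/and3P; split; last by rewrite aui.
      by apply/andP; split; lia.
    by rewrite (lt_le_trans ht) // ler_nat ltnW.
  by move/tmax; rewrite leqNgt tu.
by rewrite count_cat /= ati eqxx late addn0 addnS addn0.
Qed.

Lemma npulls_phase2_bounds j t : G1 R T a -> (1 <= t <= T)%N -> Ttil R k T < t%:R ->
  Ttil R k T / (2 * k%:R) <= (npulls a j t)%:R /\ (npulls a j t <= T)%N.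
Proof.
move=> g1 ht ht'; split.
  by apply: le_trans (g1 j) _; rewrite ler_nat phase1_pulls_le_npulls.
by apply: leq_trans (npulls_le_pred j t) _; case/andP: ht => _; apply/leq_trans/leq_pred.
Qed.

End Pulls.

Lemma mustar_attained (R : realType) k (mu : 'I_k -> R) :
  0 < mustar mu -> exists i, mustar mu = mu i.
Proof.
rewrite /mustar; elim/big_ind: _ => [|x y hx hy|j _ _]; last by exists j.
  by rewrite ltxx.
by rewrite /Num.max; case: ifP.
Qed.

Lemma muhat_ge0 (R : realType) k (Y : 'I_k -> nat -> R) i s :
  (forall i s, 0 <= Y i s <= 1) -> 0 <= muhat Y i s.
Proof.
move=> hY; rewrite /muhat divr_ge0 // sumr_ge0 // => r _.
by case/andP: (hY i r).
Qed.

Lemma NCB_ncb_index (R : realType) k T (Y : 'I_k -> nat -> R) a j t :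
  NCB T Y a j t =
  ncb_index (muhat Y j (npulls a j t)) (ln (T%:R) / (npulls a j t)%:R).
Proof. by rewrite /NCB /ncb_index mulrA. Qed.

Theorem lemma4 (R : realType) (k T : nat) (mu : 'I_k -> R)
    (Y : 'I_k -> nat -> R) (a : nat -> 'I_k) :
  (2 <= k)%N -> (2 <= T)%N ->
  (forall i, 0 <= mu i <= 1) ->
  (forall i s, 0 <= Y i s <= 1) ->
  32 * Num.sqrt (k%:R * ln (k%:R) * ln (T%:R)) / Num.sqrt (T%:R) <= mustar mu ->
  follows_NCB T Y a ->
  eventG T mu Y a ->
  forall i : 'I_k,
    (exists t : nat, [/\ (1 <= t <= T)%N, Ttil R k T < t%:R & a t = i]) ->
    mustar mu - 8 * Num.sqrt (mustar mu * ln (T%:R) / ((Ttot T a i)%:R - 1))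
      <= mu i.
Proof.
move=> hk hT hmu hY hm hncb [g1 [g2 g3]] _ /last_phase2_pull[t [ht ht' <- ->]].
set q := ncb_scale R k T; set n := npulls a ^~ t.
have hn j : Ttil R k T / (2 * k%:R) <= (n j)%:R /\ (n j <= T)%N.
  exact: npulls_phase2_bounds.
have hw j : 0 < ln (T%:R : R) / (n j)%:R /\ 8 * (ln (T%:R) / (n j)%:R) <= q.
  exact: width_le_scale hk hT (proj1 (hn j)).
have conc j : small_thr R k T < mu j ->
    `|mu j - muhat Y j (n j)| <= 3 * Num.sqrt (mu j * (ln (T%:R) / (n j)%:R)).
  by move=> hj; rewrite mulrA; apply: g2 => //; case: (hn j).
have thr : small_thr R k T = 6 * q by rewrite /small_thr mulrA.
have hmq : 32 * q <= mustar mu by rewrite /q /ncb_scale mulrA.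
have [wt wq] := hw (a t).
have [s hs] : exists s, mustar mu = mu s by apply: mustar_attained; lra.
have idx : mustar mu <= ncb_index (muhat Y (a t) (n (a t))) (ln (T%:R) / (n (a t))%:R).
  rewrite -NCB_ncb_index; apply: le_trans (hncb t ht ht' s); rewrite NCB_ncb_index.
  have [ws wqs] := hw s; rewrite hs.
  apply: ncb_index_ge _ (muhat_ge0 _ _ hY) (ltW ws) _ (conc s _); rewrite -hs ?thr; lra.
rewrite -[(npulls _ _ _).+1%:R]natr1 addrK -mulrA.
case/andP: (hmu (a t)) => mut0 _.
case: (lerP (mu (a t)) (small_thr R k T)) => hsmall.
  have := g3 _ hsmall _ (proj1 (hn (a t))) (proj2 (hn (a t))).
  rewrite -mulrA -/q => small.
  have := ncb_index_le_small (muhat_ge0 _ _ hY) (ltW wt) small wq.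
  by move/(le_trans idx); lra.
apply: mean_ge_of_ncb_index_ge _ mut0 (muhat_ge0 _ _ hY) (ltW wt) _ (conc _ hsmall) idx; lra.
Qed.
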